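(* Let $p,q$ be CFM processes with $p \approx^\oplus q$. If $p$ satisfies DNI, then $q$ satisfies DNI.
   Context: Fix a finite set of actions $Act = H \cup L \cup \{\tau\}$, where $H$ (high-level actions) and $L$ (low-level actions) are disjoint and $\tau$ is the silent action; $\mu$ ranges over $Act$, $h$ over $H$. Fix a finite set of process constants disjoint from $Act$. CFM terms: guarded $s ::= \mathbf{0} \mid \mu.q \mid s+s$; sequential $q ::= s \mid C$; parallel $p ::= q \mid p \,|\, p$. A CFM process is a term all of whose constants have a defining equation $C \doteq s$ with $s$ guarded. LTS rules: $\mu.p \xrightarrow{\mu} p$; if $p \xrightarrow{\mu} p'$ and $C \doteq p$ then $C \xrightarrow{\mu} p'$; if $p \xrightarrow{\mu} p'$ then $p+q \xrightarrow{\mu} p'$ and $q+p \xrightarrow{\mu} p'$; if $p \xrightarrow{\mu} p'$ then $p\,|\,q \xrightarrow{\mu} p'\,|\,q$ and $q\,|\,p \xrightarrow{\mu} q\,|\,p'$. Reachability is in this LTS. An FSM is $N=(S,A,T)$ with finite places $S$, finite labels $A\ni\tau$, and $T \subseteq S \times A \times (S \cup \{\theta\})$ ($\theta$ the empty multiset). Markings are finite multisets over $S$; a transition $(s,\ell,m)$ is enabled at $m_1$ if $s\in m_1$ and firing gives $m_1 \xrightarrow{\ell} (m_1\ominus s)\oplus m$. Net semantics: places are sequential CFM processes other than $\mathbf{0}$; $\mathrm{dec}(\mathbf{0})=\theta$, $\mathrm{dec}(\mu.p)=\{\mu.p\}$, $\mathrm{dec}(p+p')=\{p+p'\}$, $\mathrm{dec}(C)=\{C\}$,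 $\mathrm{dec}(p\,|\,p')=\mathrm{dec}(p)\oplus\mathrm{dec}(p')$. The net $[\![p]\!]$ has initial marking $\mathrm{dec}(p)$, all places and transitions reachable from it, and transitions $(s,\mu,\mathrm{dec}(s'))$ for reachable places $s$ with $s\xrightarrow{\mu}s'$ in the LTS. The net $[\![p\setminus H]\!]$ is obtained by renaming each place $s$ as $s\setminus H$, removing transitions labelled in $H$, and taking initial marking $\mathrm{dec}(p)\setminus H$ (elementwise renaming; similarly $m\setminus H$ for any marking $m$). Branching bisimilarity $\approx$ on places of an FSM: $s\Rightarrow^\epsilon m$ is the reflexive-transitive closure of $\tau$-steps. $R\subseteq S\times S$ is a branching bisimulation if whenever $(s_1,s_2)\in R$ and $s_1\xrightarrow{\ell}m_1$: either $\ell=\tau$ and $\exists m_2$, $s_2\Rightarrow^\epsilon m_2$ with $(s_1,m_2),(m_1,m_2)\in R$; or $\exists s,m_2$ with $s_2\Rightarrow^\epsilon s\xrightarrow{\ell}m_2$, $(s_1,s)\in R$ and either $m_1=\theta=m_2$ or $(m_1,m_2)\in R$; and symmetrically. $\approx$ is the union of all branching bisimulations. The additive closure $R^\oplus$ is the least marking relation with $(\theta,\theta)\in R^\oplus$ and closed under $(s_1,s_2)\in R,(m_1,m_2)\in R^\oplus \Rightarrow (s_1\oplus m_1,s_2\oplus m_2)\in R^\oplus$. Branching team equivalence is $\approx^\oplus$; for processes, $p\approx^\oplus q$ iff $\mathrm{dec}(p)\approx^\oplus\mathrm{dec}(q)$ in the union of the nets $[\![p]\!]$ and $[\![q]\!]$,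 and $p'\setminus H\approx^\oplus p''\setminus H$ iff $\mathrm{dec}(p')\setminus H\approx^\oplus\mathrm{dec}(p'')\setminus H$ in the union of their restricted nets. DNI: a CFM process $p$ satisfies DNI if for all $p',p''$ reachable from $p$ and $h\in H$ with $p'\xrightarrow{h}p''$, $p'\setminus H\approx^\oplus p''\setminus H$; equivalently, for all markings $m_1,m_2$ reachable from $\mathrm{dec}(p)$ in $[\![p]\!]$ and $h\in H$ with $m_1\xrightarrow{h}m_2$, $m_1\setminus H \approx^\oplus m_2\setminus H$ in $[\![p\setminus H]\!]$. *)

From Stdlib Require Import List Permutation FinFun.
Import ListNotations.
Set Implicit Arguments.

Section CFM.
Variables (A K : Type).
(* A : visible action names (H ∪ L); K : process constants. *)

Inductive act := Tau | Vis (a : A).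

Inductive term :=
| Nil
| Pre (mu : act) (t : term)
| Sum (t1 t2 : term)
| Cst (k : K)
| Par (t1 t2 : term).

Inductive guarded : term -> Prop :=
| g_nil : guarded Nil
| g_pre mu q : sequential q -> guarded (Pre mu q)
| g_sum s1 s2 : guarded s1 -> guarded s2 -> guarded (Sum s1 s2)
with sequential : term -> Prop :=
| sq_g s : guarded s -> sequential s
| sq_c k : sequential (Cst k).

Inductive parallel : term -> Prop :=
| pr_s q : sequential q -> parallel q
| pr_par p1 p2 : parallel p1 -> parallel p2 -> parallel (Par p1 p2).

Variable defn : K -> term.

Inductive step : term -> act -> term -> Prop :=
| st_pre mu p : step (Pre mu p) mu p
| st_cst k mu p' : step (defn k) mu p' -> step (Cst k) mu p'
| st_suml p q mu p' : step p mu p' -> step (Sum p q) mu p'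
| st_sumr p q mu p' : step p mu p' -> step (Sum q p) mu p'
| st_parl p q mu p' : step p mu p' -> step (Par p q) mu (Par p' q)
| st_parr p q mu p' : step p mu p' -> step (Par q p) mu (Par q p').

Inductive reach : term -> term -> Prop :=
| rc_refl p : reach p p
| rc_step p mu p' p'' : step p mu p' -> reach p' p'' -> reach p p''.

(* markings: finite multisets, represented by lists up to permutation *)
Definition marking := list term.

Fixpoint dec (t : term) : marking :=
  match t with
  | Nil => []
  | Par t1 t2 => dec t1 ++ dec t2
  | _ => [t]
  end.

Definition of_opt (o : option term) : marking :=
  match o with None => [] | Some x => [x] end.

Definition places := term -> Prop.
Definition transs := term -> act -> option term -> Prop.

Definition fire (T : transs) (m1 : marking) (l : act) (m2 : marking) : Prop :=
  exists s o rest, T s l o /\ Permutation m1 (s :: rest) /\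
                   Permutation m2 (rest ++ of_opt o).

Inductive mreach (T : transs) : marking -> marking -> Prop :=
| mr_refl m : mreach T m m
| mr_step m l m' m'' : fire T m l m' -> mreach T m' m'' -> mreach T m m''.

Definition pre_trans : transs :=
  fun s mu o => exists s', step s mu s' /\ dec s' = of_opt o.

Definition net_places (p : term) : places :=
  fun s => exists m, mreach pre_trans (dec p) m /\ In s m.
Definition net_trans (p : term) : transs :=
  fun s mu o => net_places p s /\ pre_trans s mu o.

(* The restricted net [[p \ H]]: place s \ H is represented by s itself
   (bijective renaming); transitions labelled in H are removed. *)
Definition isH (H : A -> Prop) (mu : act) : Prop :=
  match mu with Tau => False | Vis a => H a end.
Definition rnet_trans (H : A -> Prop) (p : term) : transs :=
  fun s mu o => net_trans p s mu o /\ ~ isH H mu.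

Definition uplaces (S1 S2 : places) : places := fun s => S1 s \/ S2 s.
Definition utrans (T1 T2 : transs) : transs :=
  fun s l o => T1 s l o \/ T2 s l o.

(* s ⇒ε s' : sequence of τ-steps (only markings that are places matter) *)
Inductive tau_star (T : transs) : term -> term -> Prop :=
| ts_refl s : tau_star T s s
| ts_step s s' s'' : T s Tau (Some s') -> tau_star T s' s'' -> tau_star T s s''.

Definition bb_clause (T : transs) (R : term -> term -> Prop)
    (s1 s2 : term) (l : act) (m1 : option term) : Prop :=
  (l = Tau /\ exists m2, tau_star T s2 m2 /\ R s1 m2 /\
                         exists x, m1 = Some x /\ R x m2)
  \/ (exists s m2, tau_star T s2 s /\ T s l m2 /\ R s1 s /\
        ((m1 = None /\ m2 = None) \/
         exists x y, m1 = Some x /\ m2 = Some y /\ R x y)).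

Definition is_branching_bisim (S : places) (T : transs)
    (R : term -> term -> Prop) : Prop :=
  (forall x y, R x y -> S x /\ S y) /\
  (forall s1 s2, R s1 s2 -> forall l m1, T s1 l m1 -> bb_clause T R s1 s2 l m1) /\
  (forall s1 s2, R s1 s2 -> forall l m2, T s2 l m2 ->
       bb_clause T (fun x y => R y x) s2 s1 l m2).

Definition bbisim (S : places) (T : transs) (x y : term) : Prop :=
  exists R, is_branching_bisim S T R /\ R x y.

Inductive addclos (R : term -> term -> Prop) : marking -> marking -> Prop :=
| ac_nil : addclos R [] []
| ac_cons s1 s2 m1 m2 : R s1 s2 -> addclos R m1 m2 -> addclos R (s1 :: m1) (s2 :: m2)
| ac_perm m1 m2 m1' m2' : addclos R m1 m2 -> Permutation m1 m1' ->
    Permutation m2 m2' -> addclos R m1' m2'.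

Definition team_equiv (p q : term) : Prop :=
  addclos (bbisim (uplaces (net_places p) (net_places q))
                  (utrans (net_trans p) (net_trans q))) (dec p) (dec q).

Definition team_equiv_restr (H : A -> Prop) (p q : term) : Prop :=
  addclos (bbisim (uplaces (net_places p) (net_places q))
                  (utrans (rnet_trans H p) (rnet_trans H q))) (dec p) (dec q).

Definition DNI (H : A -> Prop) (p : term) : Prop :=
  forall p' p'' h, reach p p' -> reach p p'' -> H h ->
    step p' (Vis h) p'' -> team_equiv_restr H p' p''.

End CFM.

(* Branching bisimilarity does not depend on the net in which it is computed,
   provided the net contains all derivatives of the places involved.  So the
   equivalences in [team_equiv] and [DNI] can all be read in the one FSM whose
   places are all sequential processes; there branching bisimilarity is an
   equivalence that survives removing the H-transitions, and so is its additive
   closure.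
   Let q reach q' --h--> q''.  Playing the team bisimulation game along the path
   to q' gives p' reachable from p with p' ~ q'.  The h-step of q' fires one place
   t; a place u ~ t of p' answers with u ==> w --h--> y, w ~ t and y ~ t's
   derivative, so p' ==> p1 --h--> p2 with p1 ~ q' and p2 ~ q''.  DNI of p gives
   p1\H ~ p2\H, hence q'\H ~ p1\H ~ p2\H ~ q''\H. *)
From Stdlib Require Import List Permutation FinFun.
Import ListNotations.
Set Implicit Arguments.
Unset Strict Implicit.

Section BranchingBisimilarity.
Variables A K : Type.

Definition is_branching_sim (T : transs A K) (R : term A K -> term A K -> Prop) :=
  forall s1 s2, R s1 s2 -> forall l m1, T s1 l m1 -> bb_clause T R s1 s2 l m1.

Definition bbisimilar (T : transs A K) (x y : term A K) : Prop :=
  exists R, is_branching_sim T R /\ is_branching_sim T (fun a b => R b a) /\ R x y.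

Lemma is_branching_bisim_iff (S : places A K) (T : transs A K) R :
  is_branching_bisim S T R <->
  (forall x y, R x y -> S x /\ S y) /\
  is_branching_sim T R /\ is_branching_sim T (fun a b => R b a).
Proof.
  split; intros [HS [HR HR']]; (split; [exact HS | split; [exact HR |]]);
    intros s1 s2 Hs; exact (HR' s2 s1 Hs).
Qed.

Lemma tau_star_trans (T : transs A K) a b c :
  tau_star T a b -> tau_star T b c -> tau_star T a c.
Proof. intros Hab; induction Hab; intros; auto; econstructor; eauto. Qed.

Lemma tau_star_impl (T T' : transs A K) :
  (forall s s', T s (Tau A) (Some s') -> T' s (Tau A) (Some s')) ->
  forall a b, tau_star T a b -> tau_star T' a b.
Proof. intros HT a b Hab; induction Hab; econstructor; eauto. Qed.

Lemma bb_clause_impl (T T' : transs A K) R R' s1 s2 l m1 :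
  (forall s s', T s (Tau A) (Some s') -> T' s (Tau A) (Some s')) ->
  (forall s o, T s l o -> T' s l o) ->
  (forall a b, R a b -> R' a b) ->
  bb_clause T R s1 s2 l m1 -> bb_clause T' R' s1 s2 l m1.
Proof.
  intros HTau Hl HR [[-> [m2 [Hm2 [Hr [x [-> Hx]]]]]] | [s [m2 [Hs [Hsl [Hr Hc]]]]]].
  - left; split; auto. exists m2; split; [eapply tau_star_impl; eauto |].
    split; [auto | exists x; auto].
  - right; exists s, m2; split; [eapply tau_star_impl; eauto |]. do 2 (split; auto).
    destruct Hc as [Hnone | [x [y [-> [-> Hxy]]]]]; [left; auto | right; exists x, y; auto].
Qed.

Lemma is_branching_sim_iff (T : transs A K) R R' :
  (forall a b, R a b <-> R' a b) -> is_branching_sim T R -> is_branching_sim T R'.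
Proof.
  intros HRR' HR s1 s2 Hs l m1 Hl. apply HRR' in Hs.
  eapply bb_clause_impl; [| | | exact (HR _ _ Hs _ _ Hl)]; auto; apply HRR'.
Qed.

Lemma is_branching_sim_tau_star (T : transs A K) R y y1 z :
  is_branching_sim T R -> tau_star T y y1 -> R y z ->
  exists z1, tau_star T z z1 /\ R y1 z1.
Proof.
  intros HR Hy; revert z; induction Hy as [y | y y' y1 Hyy' _ IH]; intros z Hyz.
  - exists z; split; [constructor | auto].
  - destruct (HR _ _ Hyz _ _ Hyy')
      as [[_ [z' [Hz [_ [x [Hx Hx']]]]]] | [z' [o [Hz [Hz' [_ Hc]]]]]].
    + injection Hx as <-. destruct (IH _ Hx') as [z1 [? ?]].
      exists z1; split; auto. eapply tau_star_trans; eauto.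
    + destruct Hc as [[? _] | [x [y0 [Hx [-> Hx']]]]]; [discriminate |].
      injection Hx as <-. destruct (IH _ Hx') as [z1 [? ?]].
      exists z1; split; auto. eapply tau_star_trans; [exact Hz | econstructor; eauto].
Qed.

Lemma is_branching_sim_comp (T : transs A K) R1 R2 :
  is_branching_sim T R1 -> is_branching_sim T R2 ->
  is_branching_sim T (fun x z => exists y, R1 x y /\ R2 y z).
Proof.
  intros HR1 HR2 x z [y [Hxy Hyz]] l m1 Hl.
  destruct (HR1 _ _ Hxy _ _ Hl)
    as [[-> [y1 [Hy1 [Hxy1 [x' [-> Hx'y1]]]]]] | [y1 [m2 [Hy1 [Hy1l [Hxy1 Hc]]]]]];
    destruct (is_branching_sim_tau_star HR2 Hy1 Hyz) as [z1 [Hz1 Hy1z1]].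
  - left; split; auto. exists z1; split; [exact Hz1 |].
    split; [exists y1; auto | exists x'; split; [reflexivity | exists y1; auto]].
  - destruct (HR2 _ _ Hy1z1 _ _ Hy1l)
      as [[-> [z2 [Hz2 [Hy1z2 [y' [-> Hy'z2]]]]]] | [z2 [m3 [Hz2 [Hz2l [Hy1z2 Hc']]]]]].
    + destruct Hc as [[_ Hm2] | [x' [y'' [-> [Hm2 Hx'y'']]]]]; [discriminate |].
      injection Hm2 as ->. left; split; auto. exists z2.
      split; [eapply tau_star_trans; eauto |].
      split; [exists y1; auto | exists x'; split; [reflexivity | exists y''; auto]].
    + right; exists z2, m3. split; [eapply tau_star_trans; eauto |].
      split; [exact Hz2l |]. split; [exists y1; auto |].
      destruct Hc as [[-> ->] | [x' [y' [-> [-> Hx'y']]]]];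
        destruct Hc' as [[Hn ->] | [y'' [z' [Hs [-> Hy''z']]]]]; try discriminate.
      * left; auto.
      * injection Hs as <-. right; exists x', z'. do 2 (split; auto). exists y'; auto.
Qed.

Lemma bbisimilar_sym (T : transs A K) x y : bbisimilar T x y -> bbisimilar T y x.
Proof. intros [R [HR [HR' Hxy]]]; exists (fun a b => R b a); auto. Qed.

Lemma bbisimilar_trans (T : transs A K) x y z :
  bbisimilar T x y -> bbisimilar T y z -> bbisimilar T x z.
Proof.
  intros [R1 [HR1 [HR1' Hxy]]] [R2 [HR2 [HR2' Hyz]]].
  exists (fun a c => exists b, R1 a b /\ R2 b c).
  split; [apply is_branching_sim_comp; auto |]. split; [| eauto].
  eapply is_branching_sim_iff; [| exact (is_branching_sim_comp HR2' HR1')].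
  intros a c; split; intros [b [? ?]]; eauto.
Qed.

Definition restr_trans (H : A -> Prop) (T : transs A K) : transs A K :=
  fun s l o => T s l o /\ ~ isH H l.

Lemma is_branching_sim_restr H (T : transs A K) R :
  is_branching_sim T R -> is_branching_sim (restr_trans H T) R.
Proof.
  intros HR s1 s2 Hs l m1 [Hl HlH].
  eapply bb_clause_impl; [| | | exact (HR _ _ Hs _ _ Hl)]; auto.
  - intros s s' Hss'; split; auto.
  - intros s o Hso; split; auto.
Qed.

Lemma bbisimilar_restr H (T : transs A K) x y :
  bbisimilar T x y -> bbisimilar (restr_trans H T) x y.
Proof. intros [R [? [? ?]]]; exists R; auto using is_branching_sim_restr. Qed.

Section Subnet.
Variables (S : places A K) (T G : transs A K).
Hypothesis T_restricts_G : forall s l o, T s l o <-> S s /\ G s l o.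

Lemma bbisim_bbisimilar x y : bbisim S T x y -> bbisimilar G x y.
Proof.
  assert (HG : forall R, (forall a b, R a b -> S a) ->
                 is_branching_sim T R -> is_branching_sim G R).
  { intros R HS HR s1 s2 Hs l m1 Hl.
    eapply bb_clause_impl; [| | | apply (HR _ _ Hs), T_restricts_G; eauto];
      auto; intros; apply T_restricts_G; auto. }
  intros [R [HRb Hxy]]. apply is_branching_bisim_iff in HRb as [HS [HR HR']].
  exists R. split; [| split; [| exact Hxy]]; apply HG; auto;
    intros a b Hab; apply (HS _ _ Hab).
Qed.

Hypothesis S_closed : forall s l s', S s -> G s l (Some s') -> S s'.

Lemma tau_star_subnet a b : tau_star G a b -> S a -> tau_star T a b /\ S b.
Proof.
  intros Hab; induction Hab as [| s s' s'' Hss' _ IH]; intros Hs; [split; auto; constructor |].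
  destruct IH as [? ?]; eauto. split; auto. econstructor; eauto. apply T_restricts_G; auto.
Qed.

Lemma is_branching_sim_subnet R :
  is_branching_sim G R -> is_branching_sim T (fun a b => R a b /\ S a /\ S b).
Proof.
  intros HR s1 s2 [Hs [HS1 HS2]] l m1 Hl. apply T_restricts_G in Hl as [_ Hl].
  destruct (HR _ _ Hs _ _ Hl)
    as [[-> [m2 [Hm2 [Hr [x [-> Hx]]]]]] | [s [m2 [Hm2 [Hsl [Hr Hc]]]]]];
    destruct (tau_star_subnet Hm2 HS2) as [HTm2 HSm2].
  - left; split; auto. exists m2; split; auto. split; auto. exists x; split; eauto.
  - right; exists s, m2. split; auto. split; [apply T_restricts_G; auto |]. split; auto.
    destruct Hc as [? | [x [y [-> [-> Hxy]]]]]; [left; auto | right].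
    exists x, y; eauto 7.
Qed.

Lemma bbisimilar_bbisim x y : S x -> S y -> bbisimilar G x y -> bbisim S T x y.
Proof.
  intros Sx Sy [R [HR [HR' Hxy]]].
  exists (fun a b => R a b /\ S a /\ S b). split; [| auto].
  apply is_branching_bisim_iff.
  split; [intros a b [? [? ?]]; auto |]. split; [apply is_branching_sim_subnet; auto |].
  eapply is_branching_sim_iff; [| exact (is_branching_sim_subnet HR')]. firstorder.
Qed.

End Subnet.
End BranchingBisimilarity.

Lemma Forall2_Permutation_r {X} (R : X -> X -> Prop) a b b' :
  Forall2 R a b -> Permutation b b' -> exists a', Permutation a a' /\ Forall2 R a' b'.
Proof.
  intros Hab Hbb'. apply Forall2_flip in Hab.
  destruct (Permutation_Forall2 Hbb' Hab) as [a' [? Ha']].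
  exists a'; split; auto. apply Forall2_flip in Ha'; exact Ha'.
Qed.

Lemma Forall2_trans {X} (R : X -> X -> Prop) :
  (forall x y z, R x y -> R y z -> R x z) ->
  forall a b c, Forall2 R a b -> Forall2 R b c -> Forall2 R a c.
Proof.
  intros Htr a b c Hab; revert c; induction Hab; intros c Hbc; inversion Hbc; eauto.
Qed.

Section AdditiveClosure.
Variables A K : Type.
Implicit Types (R : term A K -> term A K -> Prop) (m : marking A K).

Lemma addclos_Forall2 R m1 m2 :
  addclos R m1 m2 <-> exists m1', Permutation m1 m1' /\ Forall2 R m1' m2.
Proof.
  split.
  - intros Hm; induction Hm as [| s1 s2 m1 m2 Hs _ [a [Ha HF]] | m1 m2 m1' m2' _ [a [Ha HF]] H1 H2].
    + exists []; split; constructor.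
    + exists (s1 :: a); split; constructor; auto.
    + destruct (Forall2_Permutation_r HF H2) as [a' [Haa' HF']]. exists a'; split; auto.
      eapply perm_trans; [apply Permutation_sym, H1 |]. eapply perm_trans; [exact Ha | exact Haa'].
  - intros [m1' [Hm1 HF]]. apply ac_perm with m1' m2; [| apply Permutation_sym | ]; auto.
    clear Hm1; induction HF; constructor; auto.
Qed.

Lemma addclos_impl_in R R' m1 m2 :
  (forall a b, In a m1 -> In b m2 -> R a b -> R' a b) ->
  addclos R m1 m2 -> addclos R' m1 m2.
Proof.
  intros HRR' Hm; induction Hm as [| | ? ? ? ? _ IH Hp1 Hp2]; [constructor | |].
  - constructor; [apply HRR'; simpl; auto |]. apply IHHm; intros; apply HRR'; simpl; auto.
  - econstructor; [| exact Hp1 | exact Hp2]. apply IH; intros a b Ha Hb.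
    apply HRR'; eapply Permutation_in; eauto.
Qed.

Lemma addclos_sym R m1 m2 :
  (forall x y, R x y -> R y x) -> addclos R m1 m2 -> addclos R m2 m1.
Proof. intros Hsym Hm; induction Hm; econstructor; eauto. Qed.

Lemma addclos_trans R m1 m2 m3 :
  (forall x y z, R x y -> R y z -> R x z) ->
  addclos R m1 m2 -> addclos R m2 m3 -> addclos R m1 m3.
Proof.
  intros Htr H12 H23.
  apply addclos_Forall2 in H12 as [a [Ha F12]], H23 as [b [Hb F23]].
  destruct (Forall2_Permutation_r F12 Hb) as [a' [Ha' F12']].
  apply addclos_Forall2. exists a'; split; [eapply perm_trans; eauto |].
  eapply Forall2_trans; eauto.
Qed.

Lemma addclos_inv_middle_r R m1 l1 t l2 :
  addclos R m1 (l1 ++ t :: l2) ->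
  exists u m, Permutation m1 (u :: m) /\ R u t /\ addclos R m (l1 ++ l2).
Proof.
  intros Hm. assert (Hm' : addclos R m1 (t :: l1 ++ l2)).
  { econstructor; [exact Hm | apply Permutation_refl | apply Permutation_sym, Permutation_middle]. }
  apply addclos_Forall2 in Hm' as [m1' [Hp HF]]. inversion HF as [| u ? m ? Hut HF']; subst.
  exists u, m. split; auto. split; auto. apply addclos_Forall2; eauto.
Qed.

Lemma addclos_middle_r R m1 u m l1 t l2 :
  Permutation m1 (u :: m) -> R u t -> addclos R m (l1 ++ l2) ->
  addclos R m1 (l1 ++ t :: l2).
Proof.
  intros Hp Hut Hm. econstructor; [constructor; eauto | apply Permutation_sym, Hp |].
  apply Permutation_middle.
Qed.

End AdditiveClosure.

Section CFM.
Variables (A K : Type) (defn : K -> term A K).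
Hypothesis defn_guarded : forall k, guarded (defn k).

Lemma sequential_step t mu t' : step defn t mu t' -> sequential t -> sequential t'.
Proof.
  intros Hs; induction Hs; intros Ht; [| apply IHHs, sq_g, defn_guarded |..];
    inversion Ht as [s Hg |]; inversion Hg; subst; auto using sq_g.
Qed.

Lemma parallel_step P : parallel P -> forall mu P', step defn P mu P' -> parallel P'.
Proof.
  intros HP; induction HP; intros mu P' Hs.
  - apply pr_s; eapply sequential_step; eauto.
  - inversion Hs; subst; apply pr_par; eauto.
Qed.

Lemma parallel_reach P P' : reach defn P P' -> parallel P -> parallel P'.
Proof. intros HP; induction HP; eauto using parallel_step. Qed.

Lemma reach_trans P1 P2 P3 : reach defn P1 P2 -> reach defn P2 P3 -> reach defn P1 P3.
Proof. intros H12; induction H12; intros; auto; econstructor; eauto. Qed.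

Lemma sequential_dec (t : term A K) : sequential t -> dec t = [] \/ dec t = [t].
Proof. intros Ht; destruct t; simpl; auto. inversion Ht as [s Hg |]; inversion Hg. Qed.

Lemma parallel_dec_sequential (P t : term A K) : parallel P -> In t (dec P) -> sequential t.
Proof.
  intros HP; induction HP as [q Hq |]; intros Ht.
  - destruct (sequential_dec Hq) as [E | E]; rewrite E in Ht; [destruct Ht |].
    destruct Ht as [<- | []]; auto.
  - simpl in Ht; apply in_app_or in Ht as [?|?]; auto.
Qed.

Lemma step_dec P mu P' : step defn P mu P' ->
  exists l1 t l2 t', dec P = l1 ++ t :: l2 /\ step defn t mu t' /\
                     dec P' = l1 ++ dec t' ++ l2.
Proof.
  intros Hs; induction Hs as [| | | | ? q ? ? _ IH | ? q ? ? _ IH];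
    try solve [eexists [], _, [], _; simpl; rewrite app_nil_r; split; eauto using step].
  - destruct IH as (l1 & t & l2 & t' & E & Ht & E').
    exists l1, t, (l2 ++ dec q), t'. simpl; rewrite E, E', <- !app_assoc; auto.
  - destruct IH as (l1 & t & l2 & t' & E & Ht & E').
    exists (dec q ++ l1), t, l2, t'. simpl; rewrite E, E', <- !app_assoc; auto.
Qed.

Lemma step_fires_place P mu P' : parallel P -> step defn P mu P' ->
  exists l1 t l2 o, dec P = l1 ++ t :: l2 /\ pre_trans defn t mu o /\
                    dec P' = l1 ++ of_opt o ++ l2.
Proof.
  intros HP Hs. destruct (step_dec Hs) as (l1 & t & l2 & t' & E & Ht & E').
  assert (Hseq : sequential t).
  { apply (parallel_dec_sequential HP). rewrite E; apply in_or_app; simpl; auto. }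
  destruct (sequential_dec (sequential_step Ht Hseq)) as [Et' | Et'].
  - exists l1, t, l2, None. split; auto. split; [exists t'; auto | rewrite E', Et'; auto].
  - exists l1, t, l2, (Some t'). split; auto. split; [exists t'; auto | rewrite E', Et'; auto].
Qed.

Lemma dec_step_lift P u l u' : In u (dec P) -> step defn u l u' ->
  exists P1 a b, step defn P l P1 /\ dec P = a ++ u :: b /\ dec P1 = a ++ dec u' ++ b.
Proof.
  induction P as [| | | | P1 IH1 P2 IH2]; intros Hu Hs; simpl in Hu;
    try solve [destruct Hu as [<- | []]; exists u', [], []; simpl; rewrite app_nil_r; auto].
  - destruct Hu.
  - apply in_app_or in Hu as [Hu | Hu].
    + destruct (IH1 Hu Hs) as (Q & a & b & HQ & E & E').
      exists (Par Q P2), a, (b ++ dec P2). simpl; rewrite E, E', <- !app_assoc.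
      split; auto; constructor; auto.
    + destruct (IH2 Hu Hs) as (Q & a & b & HQ & E & E').
      exists (Par P1 Q), (dec P1 ++ a), b. simpl; rewrite E, E', <- !app_assoc.
      split; auto; apply st_parr; auto.
Qed.

Lemma place_step_lift P u m l o : Permutation (dec P) (u :: m) ->
  pre_trans defn u l o -> exists P1, step defn P l P1 /\ Permutation (dec P1) (of_opt o ++ m).
Proof.
  intros Hp [u' [Hu Eu']].
  assert (Hin : In u (dec P)) by (eapply Permutation_in; [apply Permutation_sym, Hp | simpl; auto]).
  destruct (dec_step_lift Hin Hu) as (P1 & a & b & HP1 & E & E').
  exists P1; split; auto. rewrite E', <- Eu'. rewrite E in Hp.
  apply Permutation_sym, Permutation_cons_app_inv in Hp.
  eapply perm_trans; [apply Permutation_app_swap_app |].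
  apply Permutation_app_head, Permutation_sym, Hp.
Qed.

Lemma place_tau_star_lift u w : tau_star (pre_trans defn) u w ->
  forall P m, Permutation (dec P) (u :: m) ->
  exists P1, reach defn P P1 /\ Permutation (dec P1) (w :: m).
Proof.
  intros Huw; induction Huw as [u | u u' w Hu _ IH]; intros P m Hp.
  - exists P; split; [constructor | auto].
  - destruct (place_step_lift Hp Hu) as [P1 [HP1 Hp1]].
    destruct (IH _ _ Hp1) as [P2 [? ?]]. exists P2; split; auto. econstructor; eauto.
Qed.

Lemma mreach_snoc (T : transs A K) m1 m2 l m3 :
  mreach T m1 m2 -> fire T m2 l m3 -> mreach T m1 m3.
Proof. intros H12; induction H12; intros; econstructor; eauto; constructor. Qed.

Lemma net_places_closed P s l s' :
  net_places defn P s -> pre_trans defn s l (Some s') -> net_places defn P s'.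
Proof.
  intros [m [Hm Hs]] Hss'. destruct (in_split _ _ Hs) as [a [b ->]].
  exists (a ++ b ++ [s']). split.
  - apply (mreach_snoc (l := l) Hm). exists s, (Some s'), (a ++ b).
    split; [auto | split; [apply Permutation_sym, Permutation_middle |]].
    simpl; rewrite app_assoc; auto.
  - apply in_or_app; right; apply in_or_app; right; simpl; auto.
Qed.

Lemma net_places_dec P s : In s (dec P) -> net_places defn P s.
Proof. exists (dec P); split; [constructor | auto]. Qed.

Definition team_bisim (P Q : term A K) : Prop :=
  addclos (bbisimilar (pre_trans defn)) (dec P) (dec Q).

Lemma team_equiv_team_bisim P Q : team_equiv defn P Q -> team_bisim P Q.
Proof.
  apply addclos_impl_in. intros a b _ _.
  apply bbisim_bbisimilar. intros; unfold utrans, net_trans, uplaces; tauto.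
Qed.

Lemma team_bisim_restr H P Q : team_bisim P Q ->
  addclos (bbisimilar (restr_trans H (pre_trans defn))) (dec P) (dec Q).
Proof. apply addclos_impl_in; auto using bbisimilar_restr. Qed.

Lemma team_equiv_restr_iff H P Q : team_equiv_restr defn H P Q <->
  addclos (bbisimilar (restr_trans H (pre_trans defn))) (dec P) (dec Q).
Proof.
  assert (Htrans : forall s l o,
    utrans (rnet_trans defn H P) (rnet_trans defn H Q) s l o <->
    uplaces (net_places defn P) (net_places defn Q) s /\ restr_trans H (pre_trans defn) s l o)
    by (intros; unfold utrans, rnet_trans, net_trans, uplaces, restr_trans; tauto).
  split; apply addclos_impl_in; intros a b Ha Hb.
  - apply bbisim_bbisimilar, Htrans.
  - apply bbisimilar_bbisim; auto.
    + intros s l s' [Hs | Hs] [Hss' _]; [left | right]; eapply net_places_closed; eauto.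
    + left; apply net_places_dec; auto.
    + right; apply net_places_dec; auto.
Qed.

Lemma team_bisim_step P Q mu Q' : parallel Q -> team_bisim P Q -> step defn Q mu Q' ->
  (mu = Tau A /\ exists P1, reach defn P P1 /\ team_bisim P1 Q') \/
  (exists P1 P2, reach defn P P1 /\ step defn P1 mu P2 /\
                 team_bisim P1 Q /\ team_bisim P2 Q').
Proof.
  intros HQ HPQ Hs. destruct (step_fires_place HQ Hs) as (l1 & t & l2 & o & E & Ht & E').
  unfold team_bisim in HPQ; rewrite E in HPQ.
  destruct (addclos_inv_middle_r HPQ) as (u & m & Hu & [R [HR [HR' Rut]]] & Hm).
  destruct (HR' _ _ Rut _ _ Ht)
    as [[-> [w [Huw [Rwt [x [-> Rwx]]]]]] | [w [ow [Huw [Hw [Rwt Ho]]]]]];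
    destruct (place_tau_star_lift Huw Hu) as [P1 [HP1 Hp1]].
  - left; split; auto. exists P1; split; auto. unfold team_bisim; rewrite E'.
    eapply addclos_middle_r; [exact Hp1 | exists R; auto | exact Hm].
  - right. destruct (place_step_lift Hp1 Hw) as [P2 [HP2 Hp2]].
    exists P1, P2. split; auto. split; auto. unfold team_bisim; rewrite E, E'.
    split; [eapply addclos_middle_r; [exact Hp1 | exists R; auto | exact Hm] |].
    destruct Ho as [[-> ->] | [x [y [-> [-> Ryx]]]]].
    + econstructor; [exact Hm | apply Permutation_sym, Hp2 | apply Permutation_refl].
    + eapply addclos_middle_r; [exact Hp2 | exists R; auto | exact Hm].
Qed.

Lemma team_bisim_reach Q Q' : reach defn Q Q' -> parallel Q ->
  forall P, team_bisim P Q -> exists P', reach defn P P' /\ team_bisim P' Q'.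
Proof.
  intros HQ; induction HQ as [Q | Q mu Q1 Q2 Hs _ IH]; intros HQp P HPQ.
  - exists P; split; [constructor | auto].
  - assert (HP1 : exists P1, reach defn P P1 /\ team_bisim P1 Q1).
    { destruct (team_bisim_step HQp HPQ Hs)
        as [[_ ?] | (P1 & P2 & HP1 & HP2 & _ & ?)]; auto.
      exists P2; split; auto. eapply reach_trans; eauto. econstructor; eauto; constructor. }
    destruct HP1 as [P1 [HP1 HPQ1]].
    destruct (IH (parallel_step HQp Hs) _ HPQ1) as [P2 [? ?]].
    exists P2; split; auto. eapply reach_trans; eauto.
Qed.

End CFM.

Theorem corollary4p2 (A K : Type) (finA : Finite A) (finK : Finite K)
    (H : A -> Prop) (defn : K -> term A K)
    (Hdefn : forall k, guarded (defn k))
    (p q : term A K) (Hp : parallel p) (Hq : parallel q) :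
  team_equiv defn p q -> DNI defn H p -> DNI defn H q.
Proof.
  intros Hpq HDNI q' q'' h Hq' Hq'' Hh Hs.
  destruct (team_bisim_reach Hdefn Hq' Hq (team_equiv_team_bisim Hpq)) as [p' [Hp' Hp'q']].
  destruct (team_bisim_step Hdefn (parallel_reach Hdefn Hq' Hq) Hp'q' Hs)
    as [[? _] | (p1 & p2 & Hp1 & Hp12 & Hp1q' & Hp2q'')]; [discriminate |].
  assert (Hp1_reach : reach defn p p1) by (eapply reach_trans; eauto).
  assert (Hp2_reach : reach defn p p2)
    by (eapply reach_trans; [exact Hp1_reach | econstructor; [exact Hp12 | constructor]]).
  pose proof (HDNI p1 p2 h Hp1_reach Hp2_reach Hh Hp12) as Hp1p2.
  apply team_equiv_restr_iff in Hp1p2. apply team_equiv_restr_iff.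
  eapply addclos_trans; [apply bbisimilar_trans | |].
  - apply addclos_sym; [apply bbisimilar_sym |]. apply team_bisim_restr, Hp1q'.
  - eapply addclos_trans; [apply bbisimilar_trans | exact Hp1p2 |].
    apply team_bisim_restr, Hp2q''.
Qed.
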